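(* Assume $\delta\in(0,1]$. Consider a subcritical sequence of action profiles $(\mathbf p,\mathbf q)$ (not necessarily equilibria) such that $\sup_n\max_i\iota(q_i,q_i)\,n<\infty$. Then the limiting probability that a firm learns $y$ ideas decays exponentially in $y$: there exist constants $C>0$ and $y_0$ such that for every integer $y\ge y_0$, $$\limsup_{n\to\infty}\max_i\mathbb P\big[|I_i(\mathbf p,\mathbf q)|=y\big]\le e^{-Cy}.$$
   Context: Model (for each number of firms $n\ge 2$). There are $n$ firms $1,\dots,n$; firm $i$ can discover a single idea, also labelled $i$. A parameter $\delta\in[0,1]$ is fixed. Each firm $i$ has an action $(p_i,q_i)\in[0,1)\times[0,1]$. Idea $i$ is discovered independently with probability $p_i$; $I$ is the random set of discovered ideas. The interaction rate is $\iota(q_i,q_j)=q_iq_j$. For each ordered pair $i\neq j$, independently, $i$ learns directly from $j$ with probability $\iota(q_i,q_j)$, and conditional on this, independently with probability $\delta$, $i$ also learns indirectly through $j$. The indirect-learning network has an edge $j\to i$ whenever $i$ learns indirectly through $j$. $I_i(\mathbf p,\mathbf q)=\{j\in I\setminus\{i\}:$ some firm $m$, with $m=i$ or with a directed path from $m$ to $i$ in the indirect-learning network, learns directly from $j\}$. Criticality: let $\lambda$ be the spectral radius of the $n\times n$ matrix with $(i,j)$ entry $\delta\iota(q_i,q_j)$; a sequence (indexed by $n\to\infty$) of profiles is subcritical if $\limsup_n\lambda<1$. *)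

From Stdlib Require Import Reals.
From mathcomp Require Import all_boot.
Open Scope R_scope.
Set Implicit Arguments. Unset Strict Implicit. Unset Printing Implicit Defensive.

(* Outcome space for n firms: the set of discovered ideas (d i = true iff idea i
   discovered) and, for each ordered pair (i,j), a state s(i,j) in {0,1,2}:
   0 = i does not learn directly from j,
   1 = i learns directly from j but not indirectly through j,
   2 = i learns directly from j and also indirectly through j.
   Diagonal pairs (i,i) are dummy and forced to state 0 (weight 1). *)
Definition Omega (n : nat) : finType :=
  ({ffun 'I_n -> bool} * {ffun 'I_n * 'I_n -> 'I_3})%type.

Definition pair_weight (delta qi qj : R) (diag : bool) (s : nat) : R :=
  if diag then (if s == 0%N then 1 else 0)
  else if s == 0%N then (1 - qi * qj)
  else if s == 1%N then (qi * qj * (1 - delta))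
  else (qi * qj * delta).

Definition weight (n : nat) (delta : R) (p q : nat -> R) (w : Omega n) : R :=
  (\big[Rmult/1]_(i : 'I_n) (if w.1 i then p i else 1 - p i)
   * \big[Rmult/1]_(e : 'I_n * 'I_n)
        pair_weight delta (q e.1) (q e.2) (e.1 == e.2) (w.2 e)).

Definition Prob (n : nat) (delta : R) (p q : nat -> R) (E : pred (Omega n)) : R :=
  \big[Rplus/0]_(w : Omega n | E w) weight delta p q w.

Definition indirect_edge (n : nat) (w : Omega n) : rel 'I_n :=
  fun j i => (i != j) && (nat_of_ord (w.2 (i, j)) == 2%N).

Definition direct (n : nat) (w : Omega n) (m j : 'I_n) : bool :=
  (m != j) && (nat_of_ord (w.2 (m, j)) != 0%N).

(* I_i(p,q): ideas j in I \ {i} such that some m with m = i or a directed path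
   m -> ... -> i in the indirect-learning network learns directly from j
   (connect is the reflexive-transitive closure, covering m = i). *)
Definition learned_set (n : nat) (w : Omega n) (i : 'I_n) : {set 'I_n} :=
  [set j | w.1 j && (j != i)
           && [exists m, connect (@indirect_edge n w) m i && direct w m j]].

(* Subcriticality: limsup_n (spectral radius of the matrix (delta q_i q_j)) < 1.
   The matrix is real symmetric, so all its eigenvalues are real; we write
   "limsup_n rho_n < 1" as: there is c < 1 such that eventually every (real)
   eigenvalue has absolute value <= c. *)
Definition subcritical (delta : R) (q : nat -> nat -> R) : Prop :=
  exists c : R, (c < 1) /\ exists N : nat, forall n : nat, (N <= n)%N ->
    forall (lam : R) (v : nat -> R),
      (exists i, (i < n)%N /\ v i <> 0) ->
      (forall i, (i < n)%N ->
         \big[Rplus/0]_(j < n) (delta * (q n i * q n j) * v j) = (lam * v i)) ->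
      (Rabs lam <= c).

From Stdlib Require Import Reals Lra Classical.
From HB Require Import structures.
From mathcomp Require Import all_boot.
Open Scope R_scope.
Set Implicit Arguments. Unset Strict Implicit. Unset Printing Implicit Defensive.

(* Every idea learned by firm i is learned directly by some ancestor of i in the
   indirect-learning network, so |I_i| is at most the total out-degree f of the
   ancestors of i in the direct-learning graph.  Exploring the ancestors one firm at a
   time, each exploration step reveals only the pairs (u, .) of the explored firm u,
   which are independent of the rest; hence E[z^f] is dominated by a multiplicative
   branching bound: if exp(beta q_u) bounds the expected z^(out-degree of u) times the
   product of exp(beta q_v) over the parents v of u, then E[z^f] <= exp(beta q_i).
   Subcriticality gives delta * sum_k q_k^2 <= c < 1 (q is an eigenvector of the
   rank-one interaction matrix), and sqrt n * q_k is bounded, so with beta of order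
   sqrt n a fixed z > 1 independent of n satisfies this bound.  Markov's inequality
   then gives P(|I_i| = y) <= e^(O(1)) z^(-y). *)

Lemma RplusA : associative Rplus. Proof. by move=> *; rewrite Rplus_assoc. Qed.
Lemma RmultA : associative Rmult. Proof. by move=> *; rewrite Rmult_assoc. Qed.
HB.instance Definition _ := Monoid.isComLaw.Build R 0 Rplus RplusA Rplus_comm Rplus_0_l.
HB.instance Definition _ := Monoid.isComLaw.Build R 1 Rmult RmultA Rmult_comm Rmult_1_l.
HB.instance Definition _ := Monoid.isMulLaw.Build R 0 Rmult Rmult_0_l Rmult_0_r.
HB.instance Definition _ :=
  Monoid.isAddLaw.Build R Rmult Rplus Rmult_plus_distr_r Rmult_plus_distr_l.

Section RealBigops.
Variable I : finType.
Implicit Types (P : pred I) (F G : I -> R).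

Lemma leR_sum P F G : (forall i, P i -> F i <= G i) ->
  \big[Rplus/0]_(i | P i) F i <= \big[Rplus/0]_(i | P i) G i.
Proof. by move=> FG; apply: (big_ind2 (fun x y => x <= y)) => // *; lra. Qed.

Lemma sumR_ge0 P F : (forall i, P i -> 0 <= F i) -> 0 <= \big[Rplus/0]_(i | P i) F i.
Proof. by move=> F0; apply: (big_ind (fun x => 0 <= x)) => // *; lra. Qed.

Lemma prodR_ge0 P F : (forall i, P i -> 0 <= F i) -> 0 <= \big[Rmult/1]_(i | P i) F i.
Proof. by move=> F0; apply: (big_ind (fun x => 0 <= x)) => // *; nra. Qed.

Lemma prodR_ge1 P F : (forall i, P i -> 1 <= F i) -> 1 <= \big[Rmult/1]_(i | P i) F i.
Proof. by move=> F1; apply: (big_ind (fun x => 1 <= x)) => // *; nra. Qed.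

Lemma leR_prod P F G : (forall i, P i -> 0 <= F i <= G i) ->
  \big[Rmult/1]_(i | P i) F i <= \big[Rmult/1]_(i | P i) G i.
Proof.
move=> FG; suff [] : 0 <= \big[Rmult/1]_(i | P i) F i <= \big[Rmult/1]_(i | P i) G i by [].
apply: (big_ind2 (fun x y => 0 <= x <= y)) => //; first lra.
by move=> x1 x2 y1 y2 [? ?] [? ?]; split; [nra | apply: Rmult_le_compat].
Qed.

Lemma sumR_const (n : nat) (a : R) : \big[Rplus/0]_(b < n) a = INR n * a.
Proof. by rewrite big_const_ord; elim: n => [|k IH]; rewrite ?iterS ?IH ?S_INR /=; ring. Qed.

Lemma pow_card (A : {pred I}) (z : R) : z ^ #|A| = \big[Rmult/1]_(i in A) z.
Proof. by rewrite big_const; elim: #|A| => //= k ->. Qed.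

Lemma exp_sum F : exp (\big[Rplus/0]_i F i) = \big[Rmult/1]_i exp (F i).
Proof. exact: (big_morph exp exp_plus exp_0). Qed.

End RealBigops.

Lemma sum_by_key (S K : finType) (key : S -> K) (F : S -> K -> R) :
  \big[Rplus/0]_s F s (key s) = \big[Rplus/0]_V \big[Rplus/0]_(s | key s == V) F s V.
Proof.
rewrite (partition_big key xpredT) //; apply: eq_bigr => V _.
by apply: eq_bigr => s /eqP ->.
Qed.

Section ProductMeasure.
Variables (I X : finType) (w : I -> X -> R).
Hypothesis w_ge0 : forall i x, 0 <= w i x.
Hypothesis w_sum1 : forall i, \big[Rplus/0]_x w i x = 1.
Implicit Types (s : {ffun I -> X}) (f g h : {ffun I -> X} -> R).

Definition prod_weight s : R := \big[Rmult/1]_i w i (s i).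

Definition expect f : R := \big[Rplus/0]_s (prod_weight s * f s).

Definition depends_on (Y : Type) (P : pred I) (g : {ffun I -> X} -> Y) :=
  forall s s', (forall i, P i -> s i = s' i) -> g s = g s'.

Lemma prod_weight_ge0 s : 0 <= prod_weight s.
Proof. exact: prodR_ge0. Qed.

Lemma expect_le f g : (forall s, f s <= g s) -> expect f <= expect g.
Proof.
by move=> fg; apply: leR_sum => s _; apply: Rmult_le_compat_l; [apply: prod_weight_ge0|].
Qed.

Lemma expect_ge0 f : (forall s, 0 <= f s) -> 0 <= expect f.
Proof. by move=> f0; apply: sumR_ge0 => s _; apply: Rmult_le_pos; [apply: prod_weight_ge0|]. Qed.

Lemma expect_scale c f : expect (fun s => c * f s) = c * expect f.
Proof. by rewrite /expect big_distrr; apply: eq_bigr => s _ /=; ring. Qed.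

Lemma sum_prod_weight : \big[Rplus/0]_s prod_weight s = 1.
Proof. by rewrite /prod_weight -(bigA_distr_bigA w) big1. Qed.

Lemma expect_cst c : expect (fun=> c) = c.
Proof. by rewrite /expect -big_distrl sum_prod_weight /=; ring. Qed.

Lemma expect_prod (psi : I -> X -> R) :
  expect (fun s => \big[Rmult/1]_i psi i (s i)) =
  \big[Rmult/1]_i \big[Rplus/0]_x (w i x * psi i x).
Proof.
rewrite (bigA_distr_bigA (fun i x => w i x * psi i x)).
by apply: eq_bigr => s _; rewrite /prod_weight big_split.
Qed.

Definition merge (P : pred I) (a b : {ffun I -> X}) : {ffun I -> X} :=
  [ffun i => if P i then a i else b i].

Lemma prod_weight_merge (P : pred I) (a b : {ffun I -> X}) :
  prod_weight (merge P a b) * prod_weight (merge P b a) = prod_weight a * prod_weight b.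
Proof.
rewrite /prod_weight -!big_split /=; apply: eq_bigr => i _; rewrite !ffunE.
by case: (P i); rewrite // Rmult_comm.
Qed.

(* Swapping the coordinates outside P between two independent copies preserves the
   product weight and turns g a * h b into g a * h a. *)
Lemma expect_indep (P : pred I) g h : depends_on P g -> depends_on (predC P) h ->
  expect (fun s => g s * h s) = expect g * expect h.
Proof.
move=> gP hP; rewrite /expect -[LHS]Rmult_1_r -sum_prod_weight !big_distrl /=.
under eq_bigr do rewrite big_distrr /=.
under [RHS]eq_bigr do rewrite big_distrr /=.
rewrite !pair_bigA /=.
pose swap (ab : {ffun I -> X} * {ffun I -> X}) := (merge P ab.1 ab.2, merge P ab.2 ab.1).
have swapK : involutive swap.
  by move=> [a b]; congr pair; apply/ffunP => i; rewrite !ffunE; case: (P i).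
rewrite [RHS](reindex_inj (can_inj swapK)) /=.
apply: eq_bigr => [[a b]] _ /=.
rewrite (gP (merge P a b) a) => [|i Pi]; last by rewrite ffunE Pi.
rewrite (hP (merge P b a) a) => [|i /negbTE nPi]; last by rewrite ffunE nPi.
transitivity (prod_weight a * prod_weight b * (g a * h a)); first ring.
by rewrite -(prod_weight_merge P); ring.
Qed.

(* Conditioning on [key], which is determined by the coordinates in P, leaves the law of
   the coordinates outside P unchanged. *)
Lemma expect_cond_le (P : pred I) (K : finType) (key : {ffun I -> X} -> K)
    (G : {ffun I -> X} -> R) (H : K -> {ffun I -> X} -> R) (B : K -> R) :
  (forall s, 0 <= G s) -> depends_on P key -> depends_on P G ->
  (forall V, depends_on (predC P) (H V)) -> (forall V, expect (H V) <= B V) ->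
  expect (fun s => G s * H (key s) s) <= expect (fun s => G s * B (key s)).
Proof.
move=> G0 keyP GP HP HB; rewrite /expect.
rewrite (sum_by_key key (fun s V => prod_weight s * (G s * H V s))).
rewrite (sum_by_key key (fun s V => prod_weight s * (G s * B V))).
apply: leR_sum => V _; pose GV s := if key s == V then G s else 0.
have GVP : depends_on P GV by move=> s s' ss'; rewrite /GV (keyP s s') // (GP s s').
have GV_sum f : \big[Rplus/0]_(s | key s == V) (prod_weight s * (G s * f s)) =
                expect (fun s => GV s * f s).
  by rewrite big_mkcond; apply: eq_bigr => s _; rewrite /GV; case: ifP => _; ring.
rewrite GV_sum (GV_sum (fun=> B V)) (expect_indep GVP (HP V)).
rewrite (expect_indep (h := fun=> B V) GVP) // expect_cst.
apply: Rmult_le_compat_l => //; apply: expect_ge0 => s.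
by rewrite /GV; case: ifP => _; [apply: G0 | lra].
Qed.

End ProductMeasure.

Lemma path_last_inv (T : Type) (e : rel T) (Q : T -> Prop) x p :
  Q x -> (forall a b, Q a -> e a b -> Q b) -> path e x p -> Q (last x p).
Proof.
elim: p x => [|y p IH] x Qx eQ //= /andP[exy pp].
by apply: IH => //; apply: eQ exy.
Qed.

Section Exploration.
Variable n : nat.
Local Notation I := 'I_n.
Local Notation S := {ffun I * I -> 'I_3}.
Implicit Types (T U V : {set I}) (s : S).

(* The relation [indirect_edge], read off the pair states alone. *)
Definition ind_edge s : rel I := fun a b => (b != a) && (nat_of_ord (s (b, a)) == 2%N).

Definition edge_within T s : rel I := fun a b => [&& a \in T, b \in T & ind_edge s a b].

Definition ancestors T U s : {set I} :=
  [set m in T | [exists u in U :&: T, connect (edge_within T s) m u]].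

Definition direct_set s (m : I) : {set I} :=
  [set j | (m != j) && (nat_of_ord (s (m, j)) != 0%N)].

Definition out_degree s (m : I) : nat := #|direct_set s m|.

Definition reach_degree T U s : nat := (\sum_(m in ancestors T U s) out_degree s m)%N.

Definition parents T s (u : I) : {set I} :=
  [set v in T | (v != u) && (nat_of_ord (s (u, v)) == 2%N)].

Lemma ancestors_disjoint T U s : U :&: T = set0 -> ancestors T U s = set0.
Proof.
move=> UT0; apply/setP => m; rewrite !inE.
by apply/negbTE/nandP; right; apply/existsPn => u; rewrite UT0 inE.
Qed.

(* A path from m to U inside T either avoids u, or its vertex just before the first
   visit to u is a parent of u; cutting it there stays inside T \ u. *)
Lemma ancestors_split T U s u : u \in T ->
  ancestors T U s \subset u |: ancestors (T :\ u) ((U :\ u) :|: parents T s u) s.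
Proof.
move=> uT; apply/subsetP => m; rewrite !inE => /andP[mT /existsP[u' /andP[]]].
rewrite inE => /andP[u'U u'T] /connectP[pth pth_path pth_last].
case: (eqVneq m u) => [-> | mu] //=; rewrite mT /=.
set e' := edge_within (T :\ u) s.
pose Q x := (connect e' m x /\ x != u) \/ (exists2 v, v \in parents T s u & connect e' m v).
have : Q (last m pth).
  apply: (path_last_inv (e := edge_within T s)) pth_path; first by left.
  move=> a b [[ma au] | ex] /and3P[aT bT ab]; last by right.
  case: (eqVneq b u) => [bu | bu].
    right; exists a => //; rewrite inE aT au /=.
    by move: ab; rewrite /ind_edge bu => /andP[].
  left; split => //; apply: (connect_trans ma); apply: connect1.
  by rewrite /e' /edge_within !inE aT bT au bu.
rewrite -pth_last => -[[mu' u'u] | [v vpar mv]]; apply/existsP.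
  by exists u'; rewrite !inE u'u u'U u'T mu'.
exists v; move: (vpar); rewrite inE => /andP[vT /andP[vu _]].
by rewrite mv andbT in_setI in_setU vpar orbT !inE vT vu.
Qed.

Lemma reach_degree_split T U s u : u \in T ->
  (reach_degree T U s <= out_degree s u + reach_degree (T :\ u) ((U :\ u) :|: parents T s u) s)%N.
Proof.
move=> uT; rewrite /reach_degree -big_setU1 /=; last by rewrite !inE eqxx.
apply: (sub_le_big (le := leq)) => [//|x y|m]; first exact: leq_addr.
exact/subsetP/ancestors_split.
Qed.

Lemma reach_degree_local T U s s' :
  (forall e : I * I, e.1 \in T -> s e = s' e) -> reach_degree T U s = reach_degree T U s'.
Proof.
move=> ss'; have edgeE : edge_within T s =2 edge_within T s'.
  move=> a b; rewrite /edge_within /ind_edge.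
  by case bT: (b \in T); rewrite ?andbF //= (ss' (b, a)).
rewrite /reach_degree; have -> : ancestors T U s = ancestors T U s'.
  apply/setP => m; rewrite !inE; congr andb; apply: eq_existsb => u.
  by rewrite (eq_connect edgeE).
apply: eq_bigr => m; rewrite inE => /andP[mT _].
by apply: eq_card => j; rewrite !inE (ss' (m, j)).
Qed.

Lemma row_local T s s' u : (forall e : I * I, e.1 == u -> s e = s' e) ->
  parents T s u = parents T s' u /\ out_degree s u = out_degree s' u.
Proof.
move=> ss'; split; first by apply/setP => v; rewrite !inE (ss' (u, v)).
by apply: eq_card => j; rewrite !inE (ss' (u, j)).
Qed.

End Exploration.

Lemma prodR_setU_le (I : finType) (A B : {set I}) (F : I -> R) :
  (forall i, 1 <= F i) ->
  \big[Rmult/1]_(i in A :|: B) F i <= \big[Rmult/1]_(i in A) F i * \big[Rmult/1]_(i in B) F i.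
Proof.
move=> F1; rewrite !(big_mkcond (fun i => i \in _)) -big_split /=.
apply: leR_prod => i _; rewrite inE; have := F1 i.
by case: (i \in A); case: (i \in B) => /=; split; nra.
Qed.

Section ExplorationMoment.
Variable n : nat.
Local Notation I := 'I_n.
Variable w : I * I -> 'I_3 -> R.
Hypothesis w_ge0 : forall e x, 0 <= w e x.
Hypothesis w_sum1 : forall e, \big[Rplus/0]_x w e x = 1.
Local Notation E := (expect w).

Variables (z : R) (Phi : I -> R).
Hypothesis z_ge1 : 1 <= z.
Hypothesis Phi_ge1 : forall i, 1 <= Phi i.
Hypothesis row_moment_le : forall (T : {set I}) (u : I),
  E (fun s => z ^ out_degree s u * \big[Rmult/1]_(v in parents T s u) Phi v) <= Phi u.

Lemma moment_reach_degree_le (T U : {set I}) :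
  E (fun s => z ^ reach_degree T U s) <= \big[Rmult/1]_(u in U) Phi u.
Proof.
have zpow_ge0 k : 0 <= z ^ k by apply: pow_le; lra.
have [k] := ubnP #|T|; elim: k T U => // k IH T U /ltnSE leTk.
case: (set_0Vmem (U :&: T)) => [UT0 | [u]].
  apply: (@Rle_trans _ 1); last exact: prodR_ge1.
  rewrite -[X in _ <= X](expect_cst w_sum1 1); apply/Req_le/eq_bigr => s _.
  by rewrite /reach_degree ancestors_disjoint // big_set0.
rewrite inE => /andP[uU uT].
pose key s := (U :\ u) :|: parents T s u.
apply: (@Rle_trans _ (E (fun s => z ^ out_degree s u * z ^ reach_degree (T :\ u) (key s) s))).
  by apply: (expect_le w_ge0) => s /=; rewrite -pow_add; apply/Rle_pow/leP/reach_degree_split.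
apply: (@Rle_trans _ (E (fun s => z ^ out_degree s u * \big[Rmult/1]_(v in key s) Phi v))).
  apply: (expect_cond_le w_ge0 w_sum1 (P := fun e => e.1 == u) (key := key)
    (H := fun V s => z ^ reach_degree (T :\ u) V s)
    (B := fun V => \big[Rmult/1]_(v in V) Phi v)) => //.
  - by move=> s s' /(row_local T) [pE _]; rewrite /key pE.
  - by move=> s s' /(row_local T) [_ ->].
  - move=> V s s' ss'; congr (z ^ _); apply: reach_degree_local => e.
    by rewrite !inE => /andP[eu _]; apply: ss'.
  - by move=> V; apply: IH; rewrite (cardsD1 u T) uT in leTk.
have prod_ge0 A : 0 <= \big[Rmult/1]_(v in A) Phi v.
  by apply: prodR_ge0 => v _; have := Phi_ge1 v; lra.
apply: (@Rle_trans _ (E (fun s => \big[Rmult/1]_(v in U :\ u) Phi v *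
    (z ^ out_degree s u * \big[Rmult/1]_(v in parents T s u) Phi v)))).
  apply: (expect_le w_ge0) => s /=; apply: (@Rle_trans _ (z ^ out_degree s u *
    (\big[Rmult/1]_(v in U :\ u) Phi v * \big[Rmult/1]_(v in parents T s u) Phi v))).
    exact: Rmult_le_compat_l (zpow_ge0 _) (prodR_setU_le _ _ Phi_ge1).
  by right; rewrite -!Rmult_assoc (Rmult_comm (z ^ _)).
rewrite expect_scale (big_setD1 u uU) /= Rmult_comm.
exact: Rmult_le_compat_r.
Qed.

End ExplorationMoment.

Lemma exp_le_exp x y : x <= y -> exp x <= exp y.
Proof. by case/Rle_lt_or_eq_dec => [/exp_increasing/Rlt_le | ->]; [|right]. Qed.

Section RowMoment.
Variable n : nat.
Local Notation I := 'I_n.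
Local Notation S := {ffun I * I -> 'I_3}.
Variables (delta : R) (q : nat -> R).
Hypothesis delta_01 : 0 < delta <= 1.
Hypothesis q_01 : forall i : I, 0 <= q i <= 1.

Definition pair_law (e : I * I) (x : 'I_3) : R :=
  pair_weight delta (q e.1) (q e.2) (e.1 == e.2) x.

Lemma pair_law_sum1 e : \big[Rplus/0]_x pair_law e x = 1.
Proof. by rewrite !big_ord_recl big_ord0 /pair_law /pair_weight /=; case: (_ == _) => /=; ring. Qed.

Lemma pair_law_ge0 e x : 0 <= pair_law e x.
Proof.
have [qe1 qe2] := (q_01 e.1, q_01 e.2); have qq : 0 <= q e.1 * q e.2 <= 1 by split; nra.
rewrite /pair_law /pair_weight; move: qq; set t := q e.1 * q e.2 => qq.
by case: (e.1 == e.2); case: (nat_of_ord x == 0%N); case: (nat_of_ord x == 1%N) => /=; nra.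
Qed.

Variables (z beta : R).
Hypothesis z_ge1 : 1 <= z.
Hypothesis beta_ge0 : 0 <= beta.

Definition tilt (v : I) : R := exp (beta * q v).

Lemma tilt_ge1 v : 1 <= tilt v.
Proof. by have := exp_ineq1_le (beta * q v); have := q_01 v; rewrite /tilt; nra. Qed.

(* Contribution of the pair (u, b) to z ^ out_degree s u * prod_(v in parents T s u) tilt v. *)
Definition row_factor (T : {set I}) (u b : I) (x : 'I_3) : R :=
  (if (u != b) && (nat_of_ord x != 0%N) then z else 1) *
  (if [&& b \in T, b != u & nat_of_ord x == 2%N] then tilt b else 1).

Lemma row_factorE (T : {set I}) (u : I) (s : S) :
  z ^ out_degree s u * \big[Rmult/1]_(v in parents T s u) tilt v =
  \big[Rmult/1]_(e : I * I) (if e.1 == u then row_factor T u e.2 (s e) else 1).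
Proof.
transitivity (\big[Rmult/1]_a \big[Rmult/1]_b
  (if a == u then row_factor T u b (s (a, b)) else 1)); last first.
  by rewrite pair_bigA; apply: eq_bigr => -[a b].
rewrite [RHS](bigD1 u) //= eqxx [X in _ = _ * X]big1 ?Rmult_1_r => [|a /negbTE au].
  rewrite /out_degree pow_card !(big_mkcond (fun v => v \in _)) -big_split /=.
  by apply: eq_bigr => b _; rewrite /row_factor !inE.
by rewrite big1 // => b _; rewrite au.
Qed.

Lemma row_factor_mean_le (T : {set I}) (u b : I) :
  \big[Rplus/0]_x (pair_law (u, b) x * row_factor T u b x) <=
  exp (q u * (q b * ((z - 1) + delta * z * (tilt b - 1)))).
Proof.
have [[qu0 qu1] [qb0 qb1]] := (q_01 u, q_01 b); have tb1 := tilt_ge1 b.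
have dz0 : 0 <= delta * z * (tilt b - 1) by apply: Rmult_le_pos; nra.
have a0 : 0 <= q u * (q b * ((z - 1) + delta * z * (tilt b - 1))).
  by apply: Rmult_le_pos => //; apply: Rmult_le_pos; lra.
apply: Rle_trans (exp_ineq1_le _).
rewrite !big_ord_recl big_ord0 /pair_law /pair_weight /row_factor /=.
case: (eqVneq u b) => [eub | ub] /=; first by subst b; rewrite andbF; lra.
have t0 : 0 <= q u * q b <= 1 by split; nra.
rewrite /bump /=; case: (b \in T) => /=.
- have : 0 <= q u * q b * delta * (z * tilt b) by apply: Rmult_le_pos; nra.
  have : 0 <= q u * q b * (1 - delta) * z by apply: Rmult_le_pos; nra.
  nra.
- have : 0 <= q u * q b * (delta * z * (tilt b - 1)) by apply: Rmult_le_pos; lra.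
  nra.
Qed.

Hypothesis fixed_point :
  \big[Rplus/0]_(b : I) (q b * ((z - 1) + delta * z * (tilt b - 1))) <= beta.

Lemma row_moment_le (T : {set I}) (u : I) :
  expect pair_law (fun s => z ^ out_degree s u * \big[Rmult/1]_(v in parents T s u) tilt v)
  <= tilt u.
Proof.
have -> : expect pair_law (fun s => z ^ out_degree s u *
                                    \big[Rmult/1]_(v in parents T s u) tilt v) =
    expect pair_law (fun s => \big[Rmult/1]_e (if e.1 == u then row_factor T u e.2 (s e) else 1)).
  by apply: eq_bigr => s _; rewrite row_factorE.
rewrite (@expect_prod _ _ pair_law (fun e x => if e.1 == u then row_factor T u e.2 x else 1)).
rewrite -(pair_big xpredT xpredT (fun a b =>
  \big[Rplus/0]_x (pair_law (a, b) x * (if a == u then row_factor T u b x else 1)))) /=.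
rewrite (bigD1 u) //= [X in _ * X]big1 ?Rmult_1_r => [|a /negbTE au]; last first.
  by rewrite big1 // => b _; rewrite au -[RHS](pair_law_sum1 (a, b)); apply: eq_bigr => x _; ring.
rewrite eqxx; apply: (@Rle_trans _ (\big[Rmult/1]_(b : I)
  exp (q u * (q b * ((z - 1) + delta * z * (tilt b - 1)))))).
  apply: leR_prod => b _; split; last exact: row_factor_mean_le.
  apply: sumR_ge0 => x _; apply: Rmult_le_pos; first exact: pair_law_ge0.
  by rewrite /row_factor; have := tilt_ge1 b; case: ifP; case: ifP => _ _; nra.
rewrite -exp_sum /tilt -big_distrr /= Rmult_comm; apply: exp_le_exp.
by apply: Rmult_le_compat_r; [case: (q_01 u) | ].
Qed.

End RowMoment.

Lemma card_bigcup_le (I J : finType) (A : {pred I}) (F : I -> {set J}) :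
  (#|\bigcup_(m in A) F m| <= \sum_(m in A) #|F m|)%N.
Proof.
apply: (big_ind2 (fun (B : {set J}) k => #|B| <= k)%N); first by rewrite cards0.
  by move=> B1 k1 B2 k2 le1 le2; apply: leq_trans (leq_card_setU B1 B2).1 (leq_add le1 le2).
by [].
Qed.

Lemma markov_pow (T : finType) (mu : T -> R) (E : pred T) (f : T -> nat) (z : R) (y : nat) :
  (forall t, 0 <= mu t) -> 1 <= z -> (forall t, E t -> (y <= f t)%N) ->
  \big[Rplus/0]_(t | E t) mu t <= \big[Rplus/0]_t (mu t * z ^ f t) / z ^ y.
Proof.
move=> mu0 z1 Ef; have zy : 0 < z ^ y by apply: pow_lt; lra.
rewrite /Rdiv big_distrl big_mkcond /=; apply: leR_sum => t _.
have frac_ge0 : 0 <= z ^ f t * / z ^ y.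
  by apply: Rmult_le_pos; [apply: pow_le; lra | apply/Rlt_le/Rinv_0_lt_compat].
case: ifP => Et; last by rewrite Rmult_assoc; apply: Rmult_le_pos.
have le_zy : z ^ y <= z ^ f t by apply/Rle_pow/leP/Ef.
rewrite -[X in X <= _]Rmult_1_r Rmult_assoc; apply: Rmult_le_compat_l => //.
by apply: (Rmult_le_reg_r (z ^ y)) => //; rewrite Rmult_assoc Rinv_l; lra.
Qed.

Section LearnedTail.
Variable n : nat.
Local Notation I := 'I_n.
Variables (delta : R) (p q : nat -> R).
Hypothesis delta_01 : 0 < delta <= 1.
Hypothesis p_01 : forall i : I, 0 <= p i <= 1.
Hypothesis q_01 : forall i : I, 0 <= q i <= 1.
Variables (z beta : R).
Hypothesis z_ge1 : 1 <= z.
Hypothesis beta_ge0 : 0 <= beta.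
Hypothesis fixed_point :
  \big[Rplus/0]_(b : I) (q b * ((z - 1) + delta * z * (tilt q beta b - 1))) <= beta.

Definition discovery_law (k : I) (b : bool) : R := if b then p k else 1 - p k.

Lemma weightE (w : Omega n) :
  weight delta p q w = prod_weight discovery_law w.1 * prod_weight (pair_law delta q) w.2.
Proof. by []. Qed.

Lemma learned_set_le (w : Omega n) (i : I) :
  (#|learned_set w i| <= reach_degree setT [set i] w.2)%N.
Proof.
apply: leq_trans (card_bigcup_le (mem (ancestors setT [set i] w.2)) (direct_set w.2)).
apply/subset_leq_card/subsetP => j; rewrite inE => /andP[_ /existsP[m /andP[mi mj]]].
apply/bigcupP; exists m; last by rewrite inE.
rewrite inE in_setT; apply/existsP; exists i; rewrite !inE eqxx /=.
by rewrite (@eq_connect _ _ (indirect_edge w)) // => a b; rewrite /edge_within !in_setT.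
Qed.

Lemma moment_learned_le (i : I) :
  expect (pair_law delta q) (fun s => z ^ reach_degree setT [set i] s) <= tilt q beta i.
Proof.
have := moment_reach_degree_le (pair_law_ge0 delta_01 q_01) (@pair_law_sum1 n delta q) z_ge1
  (tilt_ge1 q_01 beta_ge0) (row_moment_le delta_01 q_01 z_ge1 beta_ge0 fixed_point) setT [set i].
by rewrite big_set1.
Qed.

Lemma Prob_learned_le (i : I) (y : nat) :
  Prob delta p q (fun w => #|learned_set w i| == y) <= tilt q beta i / z ^ y.
Proof.
have discovery_law_sum1 k : \big[Rplus/0]_b discovery_law k b = 1.
  by rewrite big_bool /discovery_law /=; ring.
apply: Rle_trans (markov_pow (y := y) (f := fun w : Omega n => reach_degree setT [set i] w.2) _ z_ge1 _) _.
- move=> w; rewrite weightE; apply: Rmult_le_pos; apply: prodR_ge0 => k _.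
    by rewrite /discovery_law; case: (w.1 k); have := p_01 k; lra.
  exact: pair_law_ge0.
- by move=> w /eqP <-; apply: learned_set_le.
apply: Rmult_le_compat_r; first by apply/Rlt_le/Rinv_0_lt_compat/pow_lt; lra.
have -> : \big[Rplus/0]_(w : Omega n) (weight delta p q w * z ^ reach_degree setT [set i] w.2) =
    \big[Rplus/0]_d (prod_weight discovery_law d *
      expect (pair_law delta q) (fun s => z ^ reach_degree setT [set i] s)).
  rewrite /expect; under [RHS]eq_bigr do rewrite big_distrr /=.
  by rewrite pair_bigA; apply: eq_bigr => -[d s] _; rewrite weightE Rmult_assoc.
rewrite -big_distrl (sum_prod_weight discovery_law_sum1) /= Rmult_1_l.
exact: moment_learned_le.
Qed.

End LearnedTail.

Lemma exp_sub1_le x L : 0 <= x -> x <= L -> L < 1 -> exp x - 1 <= x / (1 - L).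
Proof.
move=> x0 xL L1; apply: (Rmult_le_reg_r (1 - L)); first lra.
rewrite /Rdiv Rmult_assoc Rinv_l; last lra.
have exp_opp : exp x * exp (- x) = 1 by rewrite -exp_plus Rplus_opp_r exp_0.
have : exp x * (1 - x) <= 1.
  by rewrite -exp_opp; apply: Rmult_le_compat_l; [apply/Rlt_le/exp_pos | have := exp_ineq1_le (- x); lra].
by have := exp_ineq1_le x; nra.
Qed.

Section FixedPoint.
Variables (sK c : R).
Hypothesis sK_gt0 : 0 < sK.
Hypothesis c_01 : 0 <= c < 1.

Definition margin : R := (1 - c) / 4.
Definition rate : R := margin / (sK + 1).
Definition ratio : R := c / (1 - margin).
(* The solution of (base - 1) * sK + base * ratio * rate = rate. *)
Definition base : R := (rate + sK) / (sK + ratio * rate).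

Lemma margin_bounds : 0 < margin <= 1 / 4.
Proof. by rewrite /margin; split; lra. Qed.

Lemma rate_gt0 : 0 < rate.
Proof. by have [? _] := margin_bounds; apply: Rdiv_lt_0_compat; lra. Qed.

Lemma ratio_bounds : 0 <= ratio < 1.
Proof.
have [m0 m1] := margin_bounds; rewrite /ratio; split.
  by apply: Rmult_le_pos; [lra | apply/Rlt_le/Rinv_0_lt_compat; lra].
apply: (Rmult_lt_reg_r (1 - margin)); first lra.
by rewrite /Rdiv Rmult_assoc Rinv_l; rewrite /margin in m0 m1 *; lra.
Qed.

Lemma base_gt1 : 1 < base.
Proof.
have r0 := rate_gt0; have [t0 t1] := ratio_bounds.
have -> : base = 1 + rate * (1 - ratio) / (sK + ratio * rate) by rewrite /base; field; nra.
suff : 0 < rate * (1 - ratio) / (sK + ratio * rate) by lra.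
by apply: Rdiv_lt_0_compat; nra.
Qed.

Lemma baseE : (base - 1) * sK + base * ratio * rate = rate.
Proof. by have r0 := rate_gt0; have [t0 t1] := ratio_bounds; rewrite /base; field; nra. Qed.

Variable n : nat.
Variables (delta : R) (q : nat -> R).
Hypothesis n_gt0 : (0 < n)%N.
Hypothesis q_01 : forall i : 'I_n, 0 <= q i <= 1.
Hypothesis q_le : forall b : 'I_n, sqrt (INR n) * q b <= sK.
Hypothesis sum_sq_le : delta * \big[Rplus/0]_(b : 'I_n) (q b * q b) <= c.

Definition beta : R := rate * sqrt (INR n).

Lemma sqrt_n_gt0 : 0 < sqrt (INR n).
Proof. by apply/sqrt_lt_R0/lt_0_INR/ltP. Qed.

Lemma beta_ge0 : 0 <= beta.
Proof. by have := rate_gt0; have := sqrt_n_gt0; rewrite /beta; nra. Qed.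

Lemma beta_q_le (b : 'I_n) : beta * q b <= margin.
Proof.
have r0 := rate_gt0; have [m0 _] := margin_bounds.
rewrite /beta Rmult_assoc; apply: (Rle_trans _ (rate * sK)).
  exact: Rmult_le_compat_l (Rlt_le _ _ r0) (q_le b).
suff : rate * (sK + 1) = margin by lra.
by rewrite /rate; field; lra.
Qed.

Lemma sum_q_le : \big[Rplus/0]_(b : 'I_n) q b <= sqrt (INR n) * sK.
Proof.
have sn := sqrt_n_gt0; apply: (Rmult_le_reg_l (sqrt (INR n))) => //.
rewrite big_distrr /=; apply: (Rle_trans _ (\big[Rplus/0]_(b : 'I_n) sK)).
  exact: leR_sum.
by rewrite sumR_const -{1}(sqrt_sqrt (INR n)) ?Rmult_assoc; [right | apply: pos_INR].
Qed.

Hypothesis delta_01 : 0 < delta <= 1.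

Lemma fixed_point_term_le (b : 'I_n) :
  q b * ((base - 1) + delta * base * (tilt q beta b - 1)) <=
  (base - 1) * q b + base * beta * delta / (1 - margin) * (q b * q b).
Proof.
have [m0 m1] := margin_bounds; have z1 := base_gt1; have [q0 q1] := q_01 b.
have tilt_le : tilt q beta b - 1 <= beta * q b / (1 - margin).
  by apply: exp_sub1_le (beta_q_le b) _; [apply: Rmult_le_pos; [apply: beta_ge0|] | lra].
have dzq0 : 0 <= delta * base * q b by apply: Rmult_le_pos; nra.
have := Rmult_le_compat_l _ _ _ dzq0 tilt_le; rewrite /Rdiv => h.
suff -> : base * beta * delta * / (1 - margin) * (q b * q b) =
          delta * base * q b * (beta * q b * / (1 - margin)) by nra.
ring.
Qed.

Lemma fixed_point_base :
  \big[Rplus/0]_(b : 'I_n) (q b * ((base - 1) + delta * base * (tilt q beta b - 1))) <= beta.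
Proof.
have [m0 m1] := margin_bounds; have z1 := base_gt1; have [t0 t1] := ratio_bounds.
have coef0 : 0 <= base * beta / (1 - margin).
  by apply: Rmult_le_pos; [have := beta_ge0; nra | apply/Rlt_le/Rinv_0_lt_compat; lra].
apply: Rle_trans (leR_sum (fun b _ => fixed_point_term_le b)) _.
have -> : \big[Rplus/0]_(b : 'I_n)
    ((base - 1) * q b + base * beta * delta / (1 - margin) * (q b * q b)) =
    (base - 1) * \big[Rplus/0]_(b : 'I_n) q b +
    base * beta * delta / (1 - margin) * \big[Rplus/0]_(b : 'I_n) (q b * q b).
  by rewrite big_split -!big_distrr.
have sq_term : base * beta * delta / (1 - margin) * \big[Rplus/0]_(b : 'I_n) (q b * q b)
               <= base * beta * ratio.
  rewrite /ratio /Rdiv.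
  have -> : base * beta * delta * / (1 - margin) * \big[Rplus/0]_(b : 'I_n) (q b * q b) =
    base * beta * / (1 - margin) * (delta * \big[Rplus/0]_(b : 'I_n) (q b * q b)) by ring.
  have -> : base * beta * (c * / (1 - margin)) = base * beta * / (1 - margin) * c by ring.
  exact: Rmult_le_compat_l.
have lin_term : (base - 1) * \big[Rplus/0]_(b : 'I_n) q b <= (base - 1) * (sqrt (INR n) * sK).
  by apply: Rmult_le_compat_l; [lra | apply: sum_q_le].
suff : (base - 1) * (sqrt (INR n) * sK) + base * beta * ratio = beta by lra.
by rewrite /beta; have := baseE; move: (sqrt (INR n)) => r e; rewrite -[in RHS]e; ring.
Qed.

End FixedPoint.

Lemma Prob_learned_le_margin (n : nat) (delta sK c : R) (p q : nat -> R) (i : 'I_n) (y : nat) :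
  0 < delta <= 1 -> 0 < sK -> 0 <= c < 1 -> (0 < n)%N ->
  (forall k : 'I_n, 0 <= p k <= 1) -> (forall k : 'I_n, 0 <= q k <= 1) ->
  (forall k : 'I_n, sqrt (INR n) * q k <= sK) ->
  delta * \big[Rplus/0]_(k : 'I_n) (q k * q k) <= c ->
  Prob delta p q (fun w => #|learned_set w i| == y) <= exp (margin c) / base sK c ^ y.
Proof.
move=> delta_01 sK_gt0 c_01 n_gt0 p_01 q_01 q_le sum_sq_le.
have z1 : 1 <= base sK c by have := base_gt1 sK_gt0 c_01; lra.
apply: Rle_trans (Prob_learned_le delta_01 p_01 q_01 z1 (beta_ge0 sK_gt0 c_01 n_gt0)
  (fixed_point_base sK_gt0 c_01 n_gt0 q_01 q_le sum_sq_le delta_01) i y) _.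
apply: Rmult_le_compat_r; first by apply/Rlt_le/Rinv_0_lt_compat/pow_lt; lra.
by apply: exp_le_exp; apply: beta_q_le.
Qed.

Lemma exp_div_pow_le (A z : R) (y : nat) : 1 < z -> 2 * A <= INR y * ln z ->
  exp A / z ^ y <= exp (- (ln z / 2 * INR y)).
Proof.
move=> z1 Ay; rewrite -Rpower_pow; last lra.
rewrite /Rpower /Rdiv -exp_Ropp -exp_plus; apply: exp_le_exp; lra.
Qed.

Lemma sqrt_INR_mul_le (n : nat) (x K : R) :
  0 <= x -> x * x * INR n <= K -> sqrt (INR n) * x <= sqrt K.
Proof.
move=> x0 le_K; rewrite -(sqrt_square x) // -sqrt_mult_alt; last exact: pos_INR.
by apply: sqrt_le_1_alt; lra.
Qed.

(* The matrix (delta q_i q_j) has rank one, with eigenvector q and eigenvalue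
   delta * sum_j q_j^2. *)
Lemma subcritical_sum_sq_le (delta : R) (q : nat -> nat -> R) : subcritical delta q ->
  exists c, 0 <= c < 1 /\ exists N, forall n, (N <= n)%N ->
    delta * \big[Rplus/0]_(k : 'I_n) (q n k * q n k) <= c.
Proof.
move=> [c [c1 [N eig_le]]]; exists (Rmax 0 c); split.
  by split; [apply: Rmax_l | apply: Rmax_lub_lt; lra].
exists N => n le_Nn; set lam := delta * _.
have [q_nz | q0] := classic (exists i, (i < n)%N /\ q n i <> 0).
  apply: (Rle_trans _ _ _ (Rle_abs lam)); apply: (Rle_trans _ c _ _ (Rmax_r 0 c)).
  apply: (eig_le n le_Nn lam (q n) q_nz) => i _.
  rewrite /lam big_distrr /= big_distrl /=.
  by apply: eq_bigr => j _; ring.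
rewrite /lam big1 => [|k _]; first by rewrite Rmult_0_r; apply: Rmax_l.
suff -> : q n k = 0 by ring.
by apply: NNPP => qk; apply: q0; exists k.
Qed.

Unset Implicit Arguments. Set Strict Implicit.

Theorem lemmaA4 (delta : R) (p q : nat -> nat -> R) :
  (0 < delta <= 1) ->
  (forall n i, (2 <= n)%N -> (i < n)%N ->
     (0 <= p n i < 1) /\ (0 <= q n i <= 1)) ->
  (exists K : R, forall n i, (2 <= n)%N -> (i < n)%N ->
     (q n i * q n i * INR n <= K)) ->
  subcritical delta q ->
  exists C : R, (0 < C) /\ exists y0 : nat, forall y : nat, (y0 <= y)%N ->
    forall eps : R, (0 < eps) ->
      exists N : nat, forall n : nat, (N <= n)%N -> forall i : 'I_n,
        (@Prob n delta (p n) (q n) (fun w => #|learned_set w i| == y)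
           <= exp (- (C * INR y)) + eps).
Proof.
move=> delta_01 pq_01 [K qK] /subcritical_sum_sq_le [c [c_01 [N sum_sq_le]]].
pose sK := sqrt K + 1; have sK_gt0 : 0 < sK by have := sqrt_pos K; rewrite /sK; lra.
pose z := base sK c; have z_gt1 : 1 < z := base_gt1 sK_gt0 c_01.
have lnz_gt0 : 0 < ln z by rewrite -ln_1; apply: ln_increasing; lra.
exists (ln z / 2); split; first lra.
have [y0 y0_gt] := INR_unbounded (2 * margin c / ln z).
exists y0 => y le_y0y eps eps_gt0; exists (N + 2)%N => n le_n i.
have n_ge2 : (2 <= n)%N := leq_trans (leq_addl N 2) le_n.
have p_01 (k : 'I_n) : 0 <= p n k <= 1 by have [? _] := pq_01 n k n_ge2 (ltn_ord k); lra.
have q_01 (k : 'I_n) : 0 <= q n k <= 1 by have [_ ?] := pq_01 n k n_ge2 (ltn_ord k).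
have q_le (k : 'I_n) : sqrt (INR n) * q n k <= sK.
  have := sqrt_INR_mul_le (proj1 (q_01 k)) (qK n k n_ge2 (ltn_ord k)); rewrite /sK; lra.
have y_large : 2 * margin c <= INR y * ln z.
  have le_y : INR y0 <= INR y by apply/le_INR/leP.
  have -> : 2 * margin c = 2 * margin c / ln z * ln z by field; lra.
  by apply: Rmult_le_compat_r; lra.
apply: Rle_trans (Prob_learned_le_margin i y delta_01 sK_gt0 c_01 (leq_trans _ n_ge2)
  p_01 q_01 q_le (sum_sq_le n (leq_trans (leq_addr 2 N) le_n))) _ => //.
by apply: Rle_trans (exp_div_pow_le z_gt1 y_large) _; lra.
Qed.
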